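(* Let $\epsilon>1$ and $\beta>0$. The scalar system $$\dot x=-\beta\frac{x}{(1+x^2)^{1/2}},\qquad x\in\mathbb{R},$$ is $SISS_L\!\left(\frac{\beta}{2},\frac{2\epsilon}{\beta}\right)$, its origin is globally asymptotically stable, and its linearization at $0$ is asymptotically stable.
   Context: Eventually bounded: $f:\mathbb{R}_{\ge0}\to\mathbb{R}^k$ is eventually bounded by $\delta$ if there is $T>0$ with $\|f(t)\|\le\delta$ for all $t\ge T$. $SISS_L(\Delta,N)$ for an input-free system $\dot x=f(x)$: for every $\delta\in(0,\Delta]$ and every bounded measurable $e:\mathbb{R}_{\ge0}\to\mathbb{R}^n$ eventually bounded by $\delta$, every solution of $\dot x=f(x)+e(t)$ is eventually bounded by $N\delta$. *)

From Stdlib Require Import Reals Lra.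
Open Scope R_scope.

Fixpoint rsum (f : nat -> R) (n : nat) : R :=
  match n with O => 0 | S k => rsum f k + f k end.

Definition null_set (A : R -> Prop) : Prop :=
  forall eps, 0 < eps ->
  exists a b : nat -> R,
    (forall n, a n <= b n) /\
    (forall x, A x -> exists n, a n < x < b n) /\
    (forall N, rsum (fun n => b n - a n) N <= eps).

Definition abs_cont_on (x : R -> R) (l r : R) : Prop :=
  forall eps, 0 < eps -> exists delta, 0 < delta /\
  forall (n : nat) (a b : nat -> R),
    (forall i, (i < n)%nat -> l <= a i /\ a i <= b i /\ b i <= r) ->
    (forall i, (S i < n)%nat -> b i <= a (S i)) ->
    rsum (fun i => b i - a i) n < delta ->
    rsum (fun i => Rabs (x (b i) - x (a i))) n < eps.

Definition cara_sol (f : R -> R) (e : R -> R) (x : R -> R) : Prop :=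
  (forall T, 0 < T -> abs_cont_on x 0 T) /\
  null_set (fun t => 0 <= t /\ ~ derivable_pt_lim x t (f (x t) + e t)).

Definition bounded_on_nonneg (e : R -> R) : Prop :=
  exists M, forall t, 0 <= t -> Rabs (e t) <= M.

Definition eventually_bounded (g : R -> R) (delta : R) : Prop :=
  exists T, 0 < T /\ forall t, T <= t -> Rabs (g t) <= delta.

Definition SISS_L (f : R -> R) (Delta N : R) : Prop :=
  forall delta, 0 < delta -> delta <= Delta ->
  forall e : R -> R, bounded_on_nonneg e -> eventually_bounded e delta ->
  forall x : R -> R, cara_sol f e x -> eventually_bounded x (N * delta).

Definition ode_sol (f : R -> R) (x : R -> R) : Prop :=
  forall t, 0 <= t -> derivable_pt_lim x t (f (x t)).

Definition lyap_stable0 (f : R -> R) : Prop :=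
  forall eps, 0 < eps -> exists delta, 0 < delta /\
  forall x, ode_sol f x -> Rabs (x 0) < delta ->
  forall t, 0 <= t -> Rabs (x t) < eps.

Definition converges_to_0 (x : R -> R) : Prop :=
  forall eta, 0 < eta -> exists T, forall t, T <= t -> Rabs (x t) < eta.

Definition GAS0 (f : R -> R) : Prop :=
  f 0 = 0 /\ lyap_stable0 f /\
  forall x, ode_sol f x -> converges_to_0 x.

Definition AS0 (f : R -> R) : Prop :=
  f 0 = 0 /\ lyap_stable0 f /\
  exists r, 0 < r /\ forall x, ode_sol f x -> Rabs (x 0) < r -> converges_to_0 x.

Definition linearization_AS0 (f : R -> R) : Prop :=
  exists a, derivable_pt_lim f 0 a /\ AS0 (fun y => a * y).

(* Outside [[-c, c]], c = (2 eps / beta) delta, the restoring speed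
   beta |x| / sqrt (1 + x^2) exceeds the eventual disturbance bound delta, because
   sqrt (1 + c^2) < 2 eps; hence |x| decreases at a uniform rate until it enters
   [[-c, c]], and it can never leave again.  For Caratheodory solutions the derivative
   exists only almost everywhere, so this is run through a barrier lemma: an absolutely
   continuous function whose derivative is <= 0 wherever it exists and the function is
   >= m cannot cross the level m.  It is proved by real induction, charging the
   exceptional null set to a cover of small total length, whose contribution absolute
   continuity makes negligible.  Stability and attractivity for the unperturbed system
   and its linearization follow from x^2 decreasing along solutions of a field with
   y f(y) <= 0, uniformly so away from 0. *)

From Stdlib Require Import Reals Lra Lia Classical FunctionalExtensionality.
From Coquelicot Require Import Coquelicot.
Open Scope R_scope.

Lemma rsum_ext f g n : (forall i, (i < n)%nat -> f i = g i) -> rsum f n = rsum g n.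
Proof.
induction n as [|n IH]; intros H; simpl; [reflexivity|].
rewrite IH, H; auto; intros; apply H; lia.
Qed.

Lemma rsum_le f g n : (forall i, (i < n)%nat -> f i <= g i) -> rsum f n <= rsum g n.
Proof.
induction n as [|n IH]; intros H; simpl; [lra|].
assert (f n <= g n) by (apply H; lia).
assert (rsum f n <= rsum g n) by (apply IH; intros; apply H; lia).
lra.
Qed.

Lemma rsum_const0 n : rsum (fun _ => 0) n = 0.
Proof. induction n as [|n IH]; simpl; [|rewrite IH]; ring. Qed.

Lemma rsum_nonneg f n : (forall i, (i < n)%nat -> 0 <= f i) -> 0 <= rsum f n.
Proof. intros H. rewrite <- (rsum_const0 n). apply rsum_le; auto. Qed.

Lemma rsum_le_mono f n m : (forall i, 0 <= f i) -> (n <= m)%nat -> rsum f n <= rsum f m.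
Proof. intros H Hnm. induction Hnm as [|m _ IH]; simpl; [lra|]. specialize (H m). lra. Qed.

Lemma rsum_plus f g n : rsum (fun i => f i + g i) n = rsum f n + rsum g n.
Proof. induction n as [|n IH]; simpl; [|rewrite IH]; ring. Qed.

Lemma rsum_indicator (w : nat -> R) n m : (n < m)%nat ->
  rsum (fun j => if Nat.eqb j n then w j else 0) m = w n.
Proof.
induction m as [|m IH]; intros H; [lia|]. simpl.
destruct (Nat.eqb_spec m n) as [->|Hmn].
- rewrite (rsum_ext _ (fun _ => 0)), rsum_const0; [ring|].
  intros i Hi. destruct (Nat.eqb_spec i n); [lia|reflexivity].
- rewrite IH; [ring|lia].
Qed.

Lemma rsum_S_ext f g k : (forall i, (i < k)%nat -> f i = g i) -> rsum g (S k) = rsum f k + g k.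
Proof. intros H. simpl. rewrite (rsum_ext f g); auto. Qed.

Lemma Rmin_gt_or_eq s x b : s < x -> s < Rmin x b \/ Rmin x b = b.
Proof. intros H. unfold Rmin. destruct (Rle_dec x b); [left|right]; lra. Qed.

Lemma null_set_subset (N N' : R -> Prop) : (forall t, N' t -> N t) -> null_set N -> null_set N'.
Proof.
intros Hsub HN eps Heps. destruct (HN eps Heps) as [a [b [Hab [Hcov Hlen]]]].
exists a, b. split; [|split]; auto.
Qed.

Lemma abs_cont_on_sub x l r l' r' :
  l <= l' -> r' <= r -> abs_cont_on x l r -> abs_cont_on x l' r'.
Proof.
intros Hl Hr H eps Heps. destruct (H eps Heps) as [del [Hdel H']].
exists del. split; auto. intros n a b Hin. apply H'. intros i Hi. specialize (Hin i Hi). lra.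
Qed.

Lemma rsum_abs_affine n (x : R -> R) s K (a b : nat -> R) :
  (forall i, (i < n)%nat -> a i <= b i) ->
  rsum (fun i => Rabs (s * x (b i) + K * b i - (s * x (a i) + K * a i))) n <=
  Rabs s * rsum (fun i => Rabs (x (b i) - x (a i))) n + Rabs K * rsum (fun i => b i - a i) n.
Proof.
induction n as [|n IH]; intros H; simpl; [lra|].
assert (IHn := IH (fun i Hi => H i (Nat.lt_lt_succ_r _ _ Hi))).
assert (Hn : a n <= b n) by (apply H; lia).
replace (s * x (b n) + K * b n - (s * x (a n) + K * a n))
  with (s * (x (b n) - x (a n)) + K * (b n - a n)) by ring.
pose proof (Rabs_triang (s * (x (b n) - x (a n))) (K * (b n - a n))) as Htri.
rewrite !Rabs_mult, (Rabs_pos_eq (b n - a n)) in Htri by lra.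
lra.
Qed.

Lemma abs_cont_on_affine x l r s K :
  abs_cont_on x l r -> abs_cont_on (fun t => s * x t + K * t) l r.
Proof.
intros H eps Heps.
set (Ms := Rabs s + 1). set (MK := Rabs K + 1).
assert (Hs : 0 < Ms) by (unfold Ms; pose proof (Rabs_pos s); lra).
assert (HK : 0 < MK) by (unfold MK; pose proof (Rabs_pos K); lra).
destruct (H (eps / 2 / Ms)) as [d1 [Hd1 H1]]; [apply Rdiv_lt_0_compat; lra|].
exists (Rmin d1 (eps / 2 / MK)). split; [apply Rmin_pos; auto; apply Rdiv_lt_0_compat; lra|].
intros n a b Hin Hord Hlen.
assert (Hab : forall i, (i < n)%nat -> a i <= b i) by (intros i Hi; destruct (Hin i Hi); lra).
assert (Hx := H1 n a b Hin Hord (Rlt_le_trans _ _ _ Hlen (Rmin_l _ _))).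
assert (Hy := Rlt_le_trans _ _ _ Hlen (Rmin_r _ _)).
assert (0 <= rsum (fun i => b i - a i) n)
  by (apply rsum_nonneg; intros i Hi; specialize (Hab i Hi); lra).
assert (0 <= rsum (fun i => Rabs (x (b i) - x (a i))) n)
  by (apply rsum_nonneg; intros; apply Rabs_pos).
eapply Rle_lt_trans; [apply rsum_abs_affine; auto|].
set (X := rsum (fun i => Rabs (x (b i) - x (a i))) n) in *.
set (Y := rsum (fun i => b i - a i) n) in *.
assert (Ms * X < eps / 2) by (apply (Rmult_lt_compat_l Ms) in Hx; auto; field_simplify in Hx; lra).
assert (MK * Y < eps / 2) by (apply (Rmult_lt_compat_l MK) in Hy; auto; field_simplify in Hy; lra).
unfold Ms, MK in *. nra.
Qed.

Lemma derivable_pt_lim_affine z u D s K :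
  derivable_pt_lim z u D -> derivable_pt_lim (fun t => s * z t + K * t) u (s * D + K).
Proof.
intro H. change (derivable_pt_lim (plus_fct (mult_real_fct s z) (mult_real_fct K id)) u (s * D + K)).
replace (s * D + K) with (s * D + K * 1) by ring.
apply derivable_pt_lim_plus; apply derivable_pt_lim_scal; [exact H|apply derivable_pt_lim_id].
Qed.

Lemma derivable_pt_lim_slope_le z s D eta : derivable_pt_lim z s D -> 0 < eta -> exists h, 0 < h /\
  (forall y, s <= y < s + h -> z y <= z s + (D + eta) * (y - s)) /\
  (forall y, s - h < y <= s -> z s <= z y + (D + eta) * (s - y)).
Proof.
intros H Heta. destruct (H eta Heta) as [del Hdel]. exists del. split; [apply cond_pos|].
assert (Hq : forall y, y <> s -> Rabs (y - s) < del ->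
          D - eta < (z y - z s) / (y - s) < D + eta).
{ intros y Hys Hy. assert (Hk : y - s <> 0) by lra.
  specialize (Hdel _ Hk Hy). replace (s + (y - s)) with y in Hdel by ring.
  apply Rabs_def2 in Hdel. lra. }
split; intros y Hy; (destruct (Req_dec y s) as [->|Hys]; [lra|]);
  assert (Hd := Hq y Hys ltac:(apply Rabs_def1; lra));
  assert (E : z y - z s = (z y - z s) / (y - s) * (y - s)) by (field; lra);
  nra.
Qed.

Lemma derivable_pt_lim_locally_lt z s D m : derivable_pt_lim z s D -> z s < m ->
  exists h, 0 < h /\ forall y, Rabs (y - s) < h -> z y < m.
Proof.
intros HD Hm. pose proof (derivable_continuous_pt z s (exist _ D HD)) as Hc.
destruct (Hc (m - z s)) as [h [Hh Hy]]; [lra|].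
exists h. split; auto. intros y Hys.
destruct (Req_dec y s) as [->|Hne]; [lra|].
assert (Hd := Hy y (conj (conj I (not_eq_sym Hne)) Hys)). unfold dist in Hd; simpl in Hd; unfold R_dist in Hd.
apply Rabs_def2 in Hd. lra.
Qed.

Lemma real_induction (E : R -> Prop) a b :
  E a -> (forall s, E s -> s <= b) ->
  (forall s, a <= s <= b -> (forall L, L < s -> exists s0, E s0 /\ L < s0 <= s) ->
     exists s', E s' /\ (s < s' \/ s' = b)) ->
  E b.
Proof.
intros Ea Eb step.
destruct (completeness E (ex_intro _ b Eb) (ex_intro _ a Ea)) as [s [Hub Hlub]].
assert (Has : a <= s) by (apply Hub; auto).
assert (Hsb : s <= b) by (apply Hlub; exact Eb).
assert (approx : forall L, L < s -> exists s0, E s0 /\ L < s0 <= s).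
{ intros L HL. apply NNPP; intro Hn.
  assert (HL' : is_upper_bound E L).
  { intros x Ex. apply Rnot_lt_le; intro Hx. apply Hn. exists x. split; [|split]; auto. }
  specialize (Hlub L HL'). lra. }
destruct (step s (conj Has Hsb) approx) as [s' [Es' [Hlt|<-]]]; [|exact Es'].
specialize (Hub s' Es'). lra.
Qed.

Section LevelInvariant.

Variables (z : R -> R) (a b m eta : R) (A B : nat -> R).

(* [z] has climbed above the slowly rising level [m + eta (s - a)] on [a, s] by at most
   its variation over disjoint intervals [[c_i, d_i]], each inside a distinct interval
   [[A n, B n]] of a small cover (those flagged by [U]). *)
Definition level_inv (s : R) : Prop :=
  a <= s <= b /\ exists (k : nat) (c d : nat -> R) (U : nat -> bool) (M : nat),
   (forall i, (i < k)%nat -> a <= c i /\ c i <= d i /\ d i <= s) /\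
   (forall i, (S i < k)%nat -> d i <= c (S i)) /\
   rsum (fun i => d i - c i) k <= rsum (fun n => if U n then B n - A n else 0) M /\
   (forall n, U n = true -> B n <= s \/ s = b) /\
   z s <= m + eta * (s - a) + rsum (fun i => Rabs (z (d i) - z (c i))) k.

Lemma level_inv_of_le s : 0 <= eta -> a <= s <= b -> z s <= m -> level_inv s.
Proof.
intros Heta Hs Hz. split; auto.
exists 0%nat, (fun _ => 0), (fun _ => 0), (fun _ => false), 0%nat.
split; [intros; lia|]. split; [intros; lia|]. split; [simpl; lra|]. split; [discriminate|].
simpl. assert (0 <= eta * (s - a)) by (apply Rmult_le_pos; lra). lra.
Qed.

Lemma level_inv_slow s0 s :
  level_inv s0 -> s0 <= s <= b -> z s <= z s0 + eta * (s - s0) -> level_inv s.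
Proof.
intros [[Ha _] [k [c [d [U [M [H1 [H2 [H3 [H4 H5]]]]]]]]]] Hs Hz.
split; [lra|]. exists k, c, d, U, M.
split; [intros i Hi; destruct (H1 i Hi); lra|].
split; [exact H2|]. split; [exact H3|].
split; [intros j Hj; destruct (H4 j Hj); [left|right]; lra|].
replace (eta * (s - a)) with (eta * (s0 - a) + eta * (s - s0)) by ring. lra.
Qed.

Lemma level_inv_cover s0 n :
  0 <= eta -> (forall j, A j <= B j) -> level_inv s0 -> A n < s0 < B n -> s0 < b ->
  level_inv (Rmin (B n) b).
Proof.
intros Heta HAB [[Ha _] [k [c [d [U [M [H1 [H2 [H3 [H4 H5]]]]]]]]]] [HAs HsB] Hsb.
set (s := Rmin (B n) b).
assert (Hs : s0 <= s <= b) by (unfold s; split; [apply Rmin_glb|apply Rmin_r]; lra).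
assert (HsB' : s <= B n) by apply Rmin_l.
assert (HUn : U n = false) by (destruct (U n) eqn:EU; auto; destruct (H4 n EU); lra).
split; [lra|].
exists (S k), (fun i => if Nat.eqb i k then s0 else c i), (fun i => if Nat.eqb i k then s else d i),
  (fun j => orb (U j) (Nat.eqb j n)), (Nat.max M (S n)).
split; [|split; [|split; [|split]]].
- intros i Hi. destruct (Nat.eqb_spec i k); [lra|].
  destruct (H1 i ltac:(lia)); lra.
- intros i Hi. destruct (Nat.eqb_spec i k); [lia|]. destruct (Nat.eqb_spec (S i) k).
  + destruct (H1 i ltac:(lia)) as [_ [_ ?]]; lra.
  + apply H2; lia.
- rewrite (rsum_S_ext (fun i => d i - c i)) by (intros i Hi; destruct (Nat.eqb_spec i k); [lia|auto]).
  rewrite Nat.eqb_refl.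
  rewrite (rsum_ext (fun j => if orb (U j) (Nat.eqb j n) then B j - A j else 0)
             (fun j => (if U j then B j - A j else 0) + (if Nat.eqb j n then B j - A j else 0))).
  2:{ intros j _. destruct (U j) eqn:EU, (Nat.eqb_spec j n); simpl; try ring. subst; congruence. }
  rewrite rsum_plus, rsum_indicator by lia.
  assert (rsum (fun j => if U j then B j - A j else 0) M
          <= rsum (fun j => if U j then B j - A j else 0) (Nat.max M (S n))).
  { apply rsum_le_mono; [|lia]. intros j. destruct (U j); [specialize (HAB j)|]; lra. }
  lra.
- intros j Hj. apply Bool.orb_true_iff in Hj as [Hj|Hj].
  + destruct (H4 j Hj); left; lra.
  + apply Nat.eqb_eq in Hj as ->. unfold s, Rmin. destruct (Rle_dec (B n) b); [left|right]; lra.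
- rewrite (rsum_S_ext (fun i => Rabs (z (d i) - z (c i))))
    by (intros i Hi; destruct (Nat.eqb_spec i k); [lia|auto]).
  rewrite Nat.eqb_refl.
  pose proof (Rle_abs (z s - z s0)).
  replace (eta * (s - a)) with (eta * (s0 - a) + eta * (s - s0)) by ring.
  assert (0 <= eta * (s - s0)) by (apply Rmult_le_pos; lra).
  lra.
Qed.

Lemma level_inv_step (N : R -> Prop) :
  0 < eta -> (forall j, A j <= B j) -> (forall t, N t -> exists n, A n < t < B n) ->
  (forall u, a <= u <= b -> ~ N u -> exists D, derivable_pt_lim z u D /\ (m <= z u -> D <= 0)) ->
  forall s, a <= s <= b -> (forall L, L < s -> exists s0, level_inv s0 /\ L < s0 <= s) ->
  exists s', level_inv s' /\ (s < s' \/ s' = b).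
Proof.
intros Heta HAB Hcov HD s Hs approx.
destruct (classic (N s)) as [HNs|HNs].
- destruct (Hcov s HNs) as [n [HAn HBn]].
  destruct (approx (A n) HAn) as [s0 [Hinv [HAs0 Hs0]]].
  destruct (Req_dec s0 b) as [Hb|Hb]; [exists s0; auto|].
  assert (s0 <= b) by apply Hinv.
  exists (Rmin (B n) b). split.
  + apply (level_inv_cover s0); auto with real; lra.
  + apply Rmin_gt_or_eq; lra.
- destruct (HD s Hs HNs) as [D [HDs HDm]].
  destruct (Rlt_or_le (z s) m) as [Hzm|Hzm].
  + destruct (derivable_pt_lim_locally_lt z s D m HDs Hzm) as [h [Hh Hnear]].
    exists (Rmin (s + h / 2) b).
    assert (s <= Rmin (s + h / 2) b <= s + h / 2) by (split; [apply Rmin_glb|apply Rmin_l]; lra).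
    split; [|apply Rmin_gt_or_eq; lra].
    apply level_inv_of_le; [lra|split; [lra|apply Rmin_r]|].
    left. apply Hnear. apply Rabs_def1; lra.
  + destruct (derivable_pt_lim_slope_le z s D eta HDs Heta) as [h [Hh [Hright Hleft]]].
    destruct (approx (s - h) ltac:(lra)) as [s0 [Hinv [Hs0h Hs0]]].
    set (s' := Rmin (s + h / 2) b).
    assert (Hs' : s <= s' <= s + h / 2) by (unfold s'; split; [apply Rmin_glb|apply Rmin_l]; lra).
    exists s'. split; [|apply Rmin_gt_or_eq; lra].
    apply (level_inv_slow s0); [exact Hinv|split; [lra|apply Rmin_r]|].
    specialize (Hright s' ltac:(lra)). specialize (Hleft s0 ltac:(lra)).
    assert (HD0 := HDm Hzm).
    assert ((D + eta) * (s - s0) <= eta * (s - s0)) by (apply Rmult_le_compat_r; lra).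
    assert ((D + eta) * (s' - s) <= eta * (s' - s)) by (apply Rmult_le_compat_r; lra).
    replace (eta * (s' - s0)) with (eta * (s - s0) + eta * (s' - s)) by ring.
    lra.
Qed.

End LevelInvariant.

Lemma abs_cont_le_of_deriv_nonpos (z : R -> R) (a b m : R) (N : R -> Prop) :
  a <= b -> abs_cont_on z a b -> null_set N ->
  (forall u, a <= u <= b -> ~ N u -> exists D, derivable_pt_lim z u D /\ (m <= z u -> D <= 0)) ->
  z a <= m -> z b <= m.
Proof.
intros Hab HAC HN HD Ha.
apply Rle_plus_epsilon. intros eps Heps.
set (eta := eps / 2 / (b - a + 1)).
assert (Heta : 0 < eta) by (apply Rdiv_lt_0_compat; lra).
assert (Hslack : eta * (b - a) <= eps / 2).
{ assert (E : eta * (b - a + 1) = eps / 2) by (unfold eta; field; lra). nra. }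
destruct (HAC (eps / 2)) as [del [Hdel HAC']]; [lra|].
destruct (HN (del / 2)) as [A [B [HAB [Hcov Hlen]]]]; [lra|].
assert (Hb : level_inv z a b m eta A B b).
{ apply (real_induction _ a).
  - apply level_inv_of_le; lra.
  - intros s [[_ Hs] _]. exact Hs.
  - exact (level_inv_step z a b m eta A B N Heta HAB Hcov HD). }
destruct Hb as [_ [k [c [d [U [M [H1 [H2 [H3 [_ H5]]]]]]]]]].
assert (rsum (fun i => Rabs (z (d i) - z (c i))) k < eps / 2).
{ apply HAC'; [intros i Hi; destruct (H1 i Hi); lra|exact H2|].
  assert (rsum (fun j => if U j then B j - A j else 0) M <= rsum (fun j => B j - A j) M).
  { apply rsum_le. intros j _. destruct (U j); [|specialize (HAB j)]; lra. }
  specialize (Hlen M). lra. }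
lra.
Qed.

Section Drift.

Variables (z : R -> R) (N : R -> Prop) (T0 c g : R).
Hypotheses (Hg : 0 < g) (HAC : forall T, T0 <= T -> abs_cont_on z T0 T) (HN : null_set N)
  (HD : forall u, T0 <= u -> ~ N u -> exists D, derivable_pt_lim z u D /\ (c <= z u -> D <= - g)).

(* While above [c], [z t + g t] does not increase, so [z] must drop to [c] in finite time. *)
Lemma drift_reaches_level : exists T1, T0 <= T1 /\ z T1 <= c.
Proof.
apply NNPP; intro Hn.
assert (Habove : forall u, T0 <= u -> c < z u).
{ intros u Hu. apply Rnot_le_lt. intro. apply Hn. exists u; auto. }
set (t1 := T0 + (Rabs (z T0 - c) + 1) / g).
assert (Et : g * t1 = g * T0 + (Rabs (z T0 - c) + 1)) by (unfold t1; field; lra).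
assert (Ht1 : T0 <= t1).
{ assert (0 < (Rabs (z T0 - c) + 1) / g) by (pose proof (Rabs_pos (z T0 - c));
    apply Rdiv_lt_0_compat; lra).
  unfold t1; lra. }
assert (Hw : 1 * z t1 + g * t1 <= 1 * z T0 + g * T0).
{ apply (abs_cont_le_of_deriv_nonpos (fun t => 1 * z t + g * t) T0 t1 _ N Ht1);
    [apply abs_cont_on_affine, HAC; lra|exact HN| |lra].
  intros u [Hu _] HNu. destruct (HD u Hu HNu) as [D [HDu HDc]].
  exists (1 * D + g). split; [apply derivable_pt_lim_affine, HDu|].
  intros _. specialize (HDc (Rlt_le _ _ (Habove u Hu))). lra. }
specialize (Habove t1 Ht1). pose proof (Rle_abs (z T0 - c)). lra.
Qed.

Lemma drift_eventually_le : exists T, T0 <= T /\ forall t, T <= t -> z t <= c.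
Proof.
destruct drift_reaches_level as [T1 [HT1 Hz]]. exists T1. split; auto. intros t Ht.
apply (abs_cont_le_of_deriv_nonpos z T1 t c N Ht); auto.
- apply (abs_cont_on_sub z T0 t); [lra|lra|apply HAC; lra].
- intros u [Hu _] HNu. destruct (HD u ltac:(lra) HNu) as [D [HDu HDc]].
  exists D. split; auto. intro Hc. specialize (HDc Hc). lra.
Qed.

End Drift.

Lemma cara_sol_eventually_le f e x c g T0 :
  cara_sol f e x -> 0 < T0 -> 0 < g ->
  (forall t, T0 <= t -> c <= x t -> f (x t) + e t <= - g) ->
  exists T, T0 <= T /\ forall t, T <= t -> x t <= c.
Proof.
intros [HAC HN] HT0 Hg Hdrift.
apply (drift_eventually_le x (fun t => 0 <= t /\ ~ derivable_pt_lim x t (f (x t) + e t)) T0 c g Hg); [|exact HN|].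
- intros T HT. apply (abs_cont_on_sub x 0 T); [lra|lra|apply HAC; lra].
- intros u Hu HNu. exists (f (x u) + e u). split; [|apply Hdrift; auto].
  apply NNPP. intro Hnd. apply HNu. split; [lra|exact Hnd].
Qed.

Lemma cara_sol_opp f e x : (forall y, f (- y) = - f y) ->
  cara_sol f e x -> cara_sol f (fun t => - e t) (fun t => - x t).
Proof.
intros Hodd [HAC HN]. split.
- intros T HT. replace (fun t => - x t) with (fun t => -1 * x t + 0 * t)
    by (apply functional_extensionality; intros; ring).
  apply abs_cont_on_affine, HAC, HT.
- revert HN. apply null_set_subset. intros t [Ht Hnd]. split; [exact Ht|]. intro Hd. apply Hnd.
  rewrite Hodd, <- Ropp_plus_distr. apply derivable_pt_lim_opp, Hd.
Qed.

Section Dissipative.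

Variable g : R -> R.
Hypothesis Hdiss : forall y, y * g y <= 0.

Lemma ode_sol_sq_mvt x s t : ode_sol g x -> 0 <= s -> s < t ->
  exists u, x t * x t - x s * x s = 2 * (x u * g (x u)) * (t - s) /\ s < u < t.
Proof.
intros Hx Hs Hst. apply (MVT_cor2 (fun t => x t * x t) (fun t => 2 * (x t * g (x t)))); auto.
intros u Hu. change (derivable_pt_lim (mult_fct x x) u (2 * (x u * g (x u)))).
replace (2 * (x u * g (x u))) with (g (x u) * x u + x u * g (x u)) by ring.
apply derivable_pt_lim_mult; apply Hx; lra.
Qed.

Lemma ode_sol_abs_nonincr x s t : ode_sol g x -> 0 <= s -> s <= t -> Rabs (x t) <= Rabs (x s).
Proof.
intros Hx Hs Hst. apply Rsqr_le_abs_0. unfold Rsqr.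
destruct (Req_dec s t) as [->|Hne]; [lra|].
destruct (ode_sol_sq_mvt x s t Hx Hs ltac:(lra)) as [u [Hu _]].
specialize (Hdiss (x u)). nra.
Qed.

Lemma dissipative_lyap_stable0 : lyap_stable0 g.
Proof.
intros eps Heps. exists eps. split; auto. intros x Hx H0 t Ht.
pose proof (ode_sol_abs_nonincr x 0 t Hx ltac:(lra) Ht). lra.
Qed.

(* The squared norm decreases at rate at least [2 k] while [|x|] stays in [[eta, |x 0|]]. *)
Lemma dissipative_converges_to_0 :
  (forall eta M, 0 < eta -> exists k, 0 < k /\
     forall y, eta * eta <= y * y -> y * y <= M * M -> y * g y <= - k) ->
  forall x, ode_sol g x -> converges_to_0 x.
Proof.
intros Hk x Hx eta Heta.
destruct (Rlt_or_le (Rabs (x 0)) eta) as [Hl|Hl].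
- exists 0. intros t Ht. pose proof (ode_sol_abs_nonincr x 0 t Hx ltac:(lra) Ht). lra.
- destruct (Hk eta (Rabs (x 0)) Heta) as [k [Hk0 Hkbound]].
  exists (x 0 * x 0 / (2 * k) + 1). intros t Ht. apply Rnot_le_lt. intro Hge.
  assert (Hx0 : 0 <= x 0 * x 0 / (2 * k))
    by (apply Rmult_le_pos; [nra|left; apply Rinv_0_lt_compat; lra]).
  assert (E : 2 * k * (x 0 * x 0 / (2 * k)) = x 0 * x 0) by (field; lra).
  destruct (ode_sol_sq_mvt x 0 t Hx ltac:(lra) ltac:(lra)) as [u [Hu Hut]].
  assert (Hmid : eta <= Rabs (x u) <= Rabs (x 0)).
  { pose proof (ode_sol_abs_nonincr x u t Hx ltac:(lra) ltac:(lra)).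
    pose proof (ode_sol_abs_nonincr x 0 u Hx ltac:(lra) ltac:(lra)). lra. }
  assert (Hsq : forall y, Rabs y * Rabs y = y * y) by (intro y; rewrite <- Rabs_mult; apply Rabs_pos_eq; nra).
  assert (Hku : x u * g (x u) <= - k).
  { pose proof (Rabs_pos (x u)). apply Hkbound; rewrite <- (Hsq (x u)); nra. }
  assert (eta * eta <= x t * x t) by (rewrite <- Hsq; nra).
  nra.
Qed.

End Dissipative.

Definition sat_field (beta y : R) : R := - beta * y / sqrt (1 + y ^ 2).

Lemma sqrt_1_plus_sq_pos y : 0 < sqrt (1 + y ^ 2).
Proof. apply sqrt_lt_R0. nra. Qed.

Lemma sqrt_1_plus_sq_sq y : sqrt (1 + y ^ 2) * sqrt (1 + y ^ 2) = 1 + y ^ 2.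
Proof. apply sqrt_sqrt. nra. Qed.

Lemma sat_field_odd beta y : sat_field beta (- y) = - sat_field beta y.
Proof. unfold sat_field. replace ((- y) ^ 2) with (y ^ 2) by ring. unfold Rdiv. ring. Qed.

Lemma div_sqrt_1_plus_sq_le c y : 0 <= c <= y -> c / sqrt (1 + c ^ 2) <= y / sqrt (1 + y ^ 2).
Proof.
intros [Hc Hcy].
pose proof (sqrt_1_plus_sq_pos c) as Hq. pose proof (sqrt_1_plus_sq_pos y) as Hp.
pose proof (sqrt_1_plus_sq_sq c) as Eq. pose proof (sqrt_1_plus_sq_sq y) as Ep.
set (q := sqrt (1 + c ^ 2)) in *. set (p := sqrt (1 + y ^ 2)) in *.
assert (E : (y * q - c * p) * (y * q + c * p) = y * y - c * c).
{ replace ((y * q - c * p) * (y * q + c * p)) with (y * y * (q * q) - c * c * (p * p)) by ring.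
  rewrite Ep, Eq. ring. }
assert (Hcross : c * p <= y * q).
{ destruct (Req_dec c 0) as [->|Hc0]; [nra|]. assert (0 < y * q + c * p) by nra. nra. }
apply (Rmult_le_reg_r (q * p)); [nra|].
replace (c / q * (q * p)) with (c * p) by (field; lra).
replace (y / p * (q * p)) with (y * q) by (field; lra).
exact Hcross.
Qed.

Lemma sat_field_le beta c y : 0 <= beta -> 0 <= c <= y -> sat_field beta y <= sat_field beta c.
Proof.
intros Hbeta Hcy. pose proof (div_sqrt_1_plus_sq_le c y Hcy).
unfold sat_field, Rdiv in *. nra.
Qed.

(* With [c = (2 eps / beta) delta <= eps] one has [sqrt (1 + c^2) < 2 eps], so the speed
   [beta c / sqrt (1 + c^2)] at level [c] beats the disturbance bound [delta]. *)
Lemma sat_field_margin eps beta delta :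
  1 < eps -> 0 < beta -> 0 < delta <= beta / 2 ->
  delta < - sat_field beta (2 * eps / beta * delta).
Proof.
intros Heps Hbeta [Hd Hdb].
set (c := 2 * eps / beta * delta).
assert (Hc : 0 <= c <= eps).
{ assert (E : c * beta = 2 * eps * delta) by (unfold c; field; lra). split; nra. }
assert (Hsq : sqrt (1 + c ^ 2) < 2 * eps).
{ rewrite <- (sqrt_pow2 (2 * eps)) by lra. apply sqrt_lt_1_alt.
  assert (c * c <= eps * eps) by nra. simpl. nra. }
pose proof (sqrt_1_plus_sq_pos c).
assert (E : - sat_field beta c = 2 * eps * delta / sqrt (1 + c ^ 2)).
{ unfold sat_field. replace (- beta * c) with (- (2 * eps * delta)) by (unfold c; field; lra).
  field. lra. }
rewrite E. apply (Rmult_lt_reg_r (sqrt (1 + c ^ 2))); [lra|].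
replace (2 * eps * delta / sqrt (1 + c ^ 2) * sqrt (1 + c ^ 2)) with (2 * eps * delta) by (field; lra).
nra.
Qed.

Lemma sat_field_SISS_L eps beta : 1 < eps -> 0 < beta ->
  SISS_L (sat_field beta) (beta / 2) (2 * eps / beta).
Proof.
intros Heps Hbeta delta Hd Hdb e _ [T0 [HT0 He]] x Hx.
set (c := 2 * eps / beta * delta).
set (g := - sat_field beta c - delta).
assert (Hg : 0 < g).
{ pose proof (sat_field_margin eps beta delta Heps Hbeta (conj Hd Hdb)). unfold g, c. lra. }
assert (Hc : 0 <= c).
{ unfold c. apply Rmult_le_pos; [apply Rdiv_le_0_compat|]; lra. }
assert (Hbelow : forall e' x', cara_sol (sat_field beta) e' x' ->
          (forall t, T0 <= t -> e' t <= delta) ->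
          exists T, T0 <= T /\ forall t, T <= t -> x' t <= c).
{ intros e' x' Hx' He'. apply (cara_sol_eventually_le _ _ _ c g T0 Hx' HT0 Hg).
  intros t Ht Hct. pose proof (sat_field_le beta c (x' t) ltac:(lra) (conj Hc Hct)).
  specialize (He' t Ht). unfold g. lra. }
destruct (Hbelow e x Hx) as [T1 [HT1 H1]].
{ intros t Ht. specialize (He t Ht). pose proof (Rle_abs (e t)). lra. }
destruct (Hbelow (fun t => - e t) (fun t => - x t) (cara_sol_opp _ _ _ (sat_field_odd beta) Hx))
  as [T2 [HT2 H2]].
{ intros t Ht. specialize (He t Ht). pose proof (Rle_abs (- e t)) as Hle.
  rewrite Rabs_Ropp in Hle. lra. }
exists (Rmax T1 T2). pose proof (Rmax_l T1 T2). pose proof (Rmax_r T1 T2).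
split; [lra|]. intros t Ht. apply Rabs_le.
specialize (H1 t ltac:(lra)). specialize (H2 t ltac:(lra)). fold c. lra.
Qed.

Lemma mul_sat_field beta y : y * sat_field beta y = - (beta * (y * y) / sqrt (1 + y ^ 2)).
Proof. unfold sat_field, Rdiv. ring. Qed.

Lemma sat_field_dissipative beta y : 0 <= beta -> y * sat_field beta y <= 0.
Proof.
intros Hbeta. rewrite mul_sat_field.
assert (0 <= beta * (y * y) / sqrt (1 + y ^ 2)).
{ apply Rdiv_le_0_compat; [nra|apply sqrt_1_plus_sq_pos]. }
lra.
Qed.

Lemma sat_field_GAS0 beta : 0 < beta -> GAS0 (sat_field beta).
Proof.
intros Hbeta.
assert (Hdiss : forall y, y * sat_field beta y <= 0)
  by (intros; apply sat_field_dissipative; lra).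
split; [unfold sat_field, Rdiv; ring|].
split; [exact (dissipative_lyap_stable0 _ Hdiss)|].
apply (dissipative_converges_to_0 _ Hdiss).
intros eta M Heta. exists (beta * (eta * eta) / sqrt (1 + M ^ 2)).
pose proof (sqrt_1_plus_sq_pos M).
split; [apply Rdiv_lt_0_compat; [apply Rmult_lt_0_compat; nra|lra]|].
intros y Hy HyM. rewrite mul_sat_field.
pose proof (sqrt_1_plus_sq_pos y).
assert (Hsq : sqrt (1 + y ^ 2) <= sqrt (1 + M ^ 2)) by (apply sqrt_le_1_alt; simpl; nra).
enough (beta * (eta * eta) / sqrt (1 + M ^ 2) <= beta * (y * y) / sqrt (1 + y ^ 2)) by lra.
unfold Rdiv. apply Rmult_le_compat; [nra|left; apply Rinv_0_lt_compat; lra|nra|].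
apply Rinv_le_contravar; lra.
Qed.

Lemma sat_field_derivative_0 beta : derivable_pt_lim (sat_field beta) 0 (- beta).
Proof.
unfold sat_field. apply is_derive_Reals. auto_derive.
- replace (1 + 0 * (0 * 1)) with 1 by ring. rewrite sqrt_1. repeat split; lra.
- replace (1 + 0 * (0 * 1)) with 1 by ring. rewrite sqrt_1. field.
Qed.

Lemma linear_AS0 a : a < 0 -> AS0 (fun y => a * y).
Proof.
intros Ha.
assert (Hdiss : forall y, y * (a * y) <= 0) by (intros; nra).
split; [ring|]. split; [exact (dissipative_lyap_stable0 _ Hdiss)|].
exists 1. split; [lra|]. intros x Hx _.
apply (dissipative_converges_to_0 _ Hdiss); [|exact Hx].
intros eta M Heta. exists (- a * (eta * eta)). split; [apply Rmult_lt_0_compat; nra|].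
intros y Hy _. assert (0 <= - a * (y * y - eta * eta)) by (apply Rmult_le_pos; lra). nra.
Qed.

Theorem lemma2 (eps beta : R) (Heps : 1 < eps) (Hbeta : 0 < beta) :
  let f := fun x : R => - beta * x / sqrt (1 + x ^ 2) in
  SISS_L f (beta / 2) (2 * eps / beta) /\ GAS0 f /\ linearization_AS0 f.
Proof.
intros f. split; [|split].
- exact (sat_field_SISS_L eps beta Heps Hbeta).
- exact (sat_field_GAS0 beta Hbeta).
- exists (- beta). split; [exact (sat_field_derivative_0 beta)|apply linear_AS0; lra].
Qed.
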